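(* Let $c\ge2$, $d\ge c$. Let $\mathbb E\Gamma=[\mathbb E\gamma_1,\dots,\mathbb E\gamma_c]\in\mathbb R^{d\times c}$ and server vectors $\gamma_1,\dots,\gamma_c\in\mathbb R^d$, let $\hat{\mathcal P}$ be an affine subspace of $\mathbb R^d$, $\Pi_{\hat{\mathcal P}}(\Gamma)=[\Pi_{\hat{\mathcal P}}(\gamma_1),\dots,\Pi_{\hat{\mathcal P}}(\gamma_c)]$ and $\Delta\Gamma=\Pi_{\hat{\mathcal P}}(\Gamma)-\mathbb E\Gamma$. Assume the $(c-1)$-th largest singular value of $\mathbb E\Gamma\,(I-\frac1c\mathbf 1\mathbf 1^\top)$ is at least $\sigma_s$, and that $\|\Delta\Gamma\|_2<\sigma_s$ (spectral norm). Let $g_h\in\mathbb R^d$ and $\mathbb Eg_h\in\mathbb R^d$, let $p_h\in\mathbb R^c$ be a probability vector with $\mathbb E\Gamma\,p_h=\mathbb Eg_h$, and let $\hat p_h\in\mathbb R^c$ satisfy $\Pi_{\hat{\mathcal P}}(\Gamma)\hat p_h=\Pi_{\hat{\mathcal P}}(g_h)$ and $\mathbf 1^\top\hat p_h=1$. Writing $\Delta g_h=\Pi_{\hat{\mathcal P}}(g_h)-\mathbb Eg_h$, $$\|\hat p_h-p_h\|_2\le\frac{\|\Delta g_h\|_2+\sqrt2\,\|\Delta\Gamma\|_2}{\sigma_s-\|\Delta\Gamma\|_2}.$$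
   Context: For an affine subspace $\mathcal P=\{U\lambda+m\}$ ($U$ with orthonormal columns), $\Pi_{\mathcal P}(w)=UU^\top(w-m)+m$ is its orthogonal projection. $\mathbf 1\in\mathbb R^c$ is the all-ones vector. *)

From HB Require Import structures.
From mathcomp Require Import all_boot all_order all_algebra.
From mathcomp Require Import all_classical all_reals.
Set Implicit Arguments. Unset Strict Implicit. Unset Printing Implicit Defensive.
Import Order.TTheory GRing.Theory Num.Theory.
Local Open Scope ring_scope.

Definition norm2 {R : realType} {n : nat} (v : 'cV[R]_n) : R :=
  Num.sqrt (\sum_i (v i 0) ^+ 2).

Definition spec_norm {R : realType} {m n : nat} (A : 'M[R]_(m, n)) : R :=
  sup [set e : R | exists x : 'cV[R]_n, norm2 x = 1 /\ e = norm2 (A *m x)].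

(* s is the list of eigenvalues (with multiplicity) of A^T A, sorted in
   non-increasing order; the singular values of A are then the Num.sqrt s`_k,
   the k-th largest being Num.sqrt s`_(k-1). *)
Definition sq_sing_vals {R : realType} {m n : nat} (A : 'M[R]_(m, n)) (s : seq R)
  : Prop :=
  [/\ sorted (fun x y : R => y <= x) s, size s = n &
      char_poly (A^T *m A) = \prod_(x <- s) ('X - x%:P)].

(* orthogonal projection onto the affine subspace {U l + m0} (U orthonormal cols) *)
Definition aproj {R : realType} {d k : nat} (U : 'M[R]_(d, k)) (m0 : 'cV[R]_d)
  (w : 'cV[R]_d) : 'cV[R]_d := U *m U^T *m (w - m0) + m0.

Definition aprojmx {R : realType} {d k c : nat} (U : 'M[R]_(d, k)) (m0 : 'cV[R]_d)
  (G : 'M[R]_(d, c)) : 'M[R]_(d, c) :=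
  \matrix_(i, j) (aproj U m0 (col j G)) i 0.

Definition centering {R : realType} (c : nat) : 'M[R]_c :=
  1%:M - (c%:R)^-1 *: const_mx 1.

From HB Require Import structures.
From mathcomp Require Import all_boot all_order all_algebra.
From mathcomp Require Import all_classical all_reals.
From mathcomp Require Import complex spectral.
From mathcomp Require Import ring lra zify.
Import Order.TTheory GRing.Theory Num.Theory.
Set Implicit Arguments. Unset Strict Implicit. Unset Printing Implicit Defensive.
Local Open Scope ring_scope.

(* Let e := phat - p, DGam := aprojmx U m0 Gam - EGam and Dg := aproj U m0 g - Eg.
   Since 1^T e = 0, e is fixed by the centering matrix C, so EGam e = (EGam C) e.
   The Gram matrix of EGam C is symmetric, kills 1, and all its eigenvalues
   except the smallest are at least sigma_s^2; diagonalising it over R[i], the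
   component of e along the kernel vanishes by orthogonality to 1, whence
   sigma_s |e| <= |EGam e|. On the other hand EGam e = Dg - DGam p - DGam e and
   |p| <= 1, so |EGam e| <= |Dg| + |DGam| + |DGam| |e|. *)

Section EuclideanNorm.
Variable R : realType.

Lemma sumr_mul_sqr_le n (a b : 'I_n -> R) :
  (\sum_i a i * b i) ^+ 2 <= (\sum_i a i ^+ 2) * (\sum_i b i ^+ 2).
Proof.
set A := \sum_i a i ^+ 2; set B := \sum_i b i ^+ 2; set C := \sum_i a i * b i.
have A_ge0 : 0 <= A by apply: sumr_ge0 => i _; exact: sqr_ge0.
have [A0 | A_neq0] := eqVneq A 0.
  have a0 i : a i = 0.
    apply/eqP; rewrite -sqrf_eq0; apply/eqP.
    by apply: (psumr_eq0P (P := predT) _ A0) => // j _; exact: sqr_ge0.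
  have -> : C = 0 by rewrite /C big1 // => i _; rewrite a0 mul0r.
  by rewrite A0 expr0n mul0r.
have A_gt0 : 0 < A by rewrite lt_def A_neq0.
(* [0 <= sum_i (C a_i - A b_i)^2 = A (A B - C^2)] *)
have : 0 <= \sum_i (C * a i - A * b i) ^+ 2 by apply: sumr_ge0 => i _; exact: sqr_ge0.
have expand i : (C * a i - A * b i) ^+ 2 =
    C ^+ 2 * a i ^+ 2 - 2 * C * A * (a i * b i) + A ^+ 2 * b i ^+ 2 by ring.
rewrite (eq_bigr _ (fun i _ => expand i)) !big_split /= sumrN -!mulr_sumr -/A -/B -/C.
have -> : C ^+ 2 * A - 2 * C * A * C + A ^+ 2 * B = A * (A * B - C ^+ 2) by ring.
by rewrite pmulr_rge0 // subr_ge0.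
Qed.

Lemma sqr_norm2 n (v : 'cV[R]_n) : norm2 v ^+ 2 = \sum_i v i 0 ^+ 2.
Proof. by rewrite sqr_sqrtr //; apply: sumr_ge0 => i _; exact: sqr_ge0. Qed.

Lemma norm2_ge0 n (v : 'cV[R]_n) : 0 <= norm2 v.
Proof. exact: sqrtr_ge0. Qed.

Lemma norm2_eq0 n (v : 'cV[R]_n) : (norm2 v == 0) = (v == 0).
Proof.
apply/idP/eqP => [|->]; last by rewrite /norm2 big1 ?sqrtr0 // => i _; rewrite mxE expr0n.
rewrite -sqrf_eq0 sqr_norm2 => /eqP v0; apply/matrixP => i j; rewrite ord1 mxE.
apply/eqP; rewrite -sqrf_eq0; apply/eqP.
by apply: (psumr_eq0P (P := predT) _ v0) => // k _; exact: sqr_ge0.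
Qed.

Lemma norm2_0 n : norm2 (0 : 'cV[R]_n) = 0.
Proof. by apply/eqP; rewrite norm2_eq0. Qed.

Lemma norm2Z n a (v : 'cV[R]_n) : norm2 (a *: v) = `|a| * norm2 v.
Proof.
rewrite /norm2 -sqrtr_sqr -sqrtrM ?sqr_ge0 // mulr_sumr.
by congr Num.sqrt; apply: eq_bigr => i _; rewrite mxE exprMn.
Qed.

Lemma norm2N n (v : 'cV[R]_n) : norm2 (- v) = norm2 v.
Proof. by rewrite -scaleN1r norm2Z normrN1 mul1r. Qed.

Lemma dot_le_norm2 n (u v : 'cV[R]_n) : \sum_i u i 0 * v i 0 <= norm2 u * norm2 v.
Proof.
apply: le_trans (ler_norm _) _.
rewrite -sqrtr_sqr -sqrtrM ?sumr_ge0 // => [|i _]; last exact: sqr_ge0.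
by rewrite ler_sqrt ?mulr_ge0 ?sumr_ge0 ?sumr_mul_sqr_le // => i _; exact: sqr_ge0.
Qed.

Lemma norm2D n (u v : 'cV[R]_n) : norm2 (u + v) <= norm2 u + norm2 v.
Proof.
rewrite -(@ler_pXn2r _ 2) ?nnegrE ?addr_ge0 ?norm2_ge0 //.
have -> : norm2 (u + v) ^+ 2 =
    norm2 u ^+ 2 + 2 * \sum_i u i 0 * v i 0 + norm2 v ^+ 2.
  rewrite !sqr_norm2 mulr_sumr -!big_split /=.
  by apply: eq_bigr => i _; rewrite mxE; ring.
by rewrite sqrrD; have := dot_le_norm2 u v; lra.
Qed.

Lemma norm2_abs_entry_le n (v : 'cV[R]_n) i : `|v i 0| <= norm2 v.
Proof.
rewrite -sqrtr_sqr ler_sqrt ?sumr_ge0 // => [|j _]; last exact: sqr_ge0.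
by rewrite (bigD1 i) //= lerDl sumr_ge0 // => j _; exact: sqr_ge0.
Qed.

Lemma trmx_mul_self n (v : 'cV[R]_n) : (v^T *m v) 0 0 = norm2 v ^+ 2.
Proof. by rewrite sqr_norm2 mxE; apply: eq_bigr => i _; rewrite mxE expr2. Qed.

Lemma norm2_prob_le1 n (p : 'cV[R]_n) :
  (forall i, 0 <= p i 0) -> \sum_i p i 0 = 1 -> norm2 p <= 1.
Proof.
move=> p_ge0 p_sum1; rewrite -sqrtr1 ler_sqrt // -p_sum1; apply: ler_sum => i _.
have p_le1 : p i 0 <= 1.
  by rewrite -p_sum1 (bigD1 i) //= lerDl sumr_ge0.
by rewrite expr2 ler_piMr.
Qed.

End EuclideanNorm.

Section SpectralNorm.
Variable R : realType.

Lemma spec_norm_has_ubound m n (A : 'M[R]_(m, n)) :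
  has_ubound [set e : R | exists x : 'cV[R]_n, norm2 x = 1 /\ e = norm2 (A *m x)].
Proof.
exists (Num.sqrt (\sum_i (\sum_j `|A i j|) ^+ 2)) => _ [x [x1 ->]].
rewrite ler_sqrt; last by apply: sumr_ge0 => i _; exact: sqr_ge0.
apply: ler_sum => i _; rewrite -real_normK ?num_real //.
have row_ge0 : 0 <= \sum_j `|A i j| by apply: sumr_ge0 => j _; exact: normr_ge0.
rewrite ler_pXn2r ?nnegrE ?normr_ge0 //.
rewrite mxE; apply: le_trans (ler_norm_sum _ _ _) _; apply: ler_sum => j _.
by rewrite normrM -[leRHS]mulr1 ler_wpM2l // -x1 norm2_abs_entry_le.
Qed.

Lemma norm2_mulmx_le m n (A : 'M[R]_(m, n)) (x : 'cV[R]_n) :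
  norm2 (A *m x) <= spec_norm A * norm2 x.
Proof.
have [->|x_neq0] := eqVneq x 0; first by rewrite mulmx0 !norm2_0 mulr0.
have nx_gt0 : 0 < norm2 x by rewrite lt_def norm2_eq0 x_neq0 norm2_ge0.
have unit_x : norm2 ((norm2 x)^-1 *: x) = 1.
  by rewrite norm2Z ger0_norm ?invr_ge0 ?norm2_ge0 // mulVf ?gt_eqF.
have : norm2 (A *m ((norm2 x)^-1 *: x)) <= spec_norm A.
  by apply: (ub_le_sup (spec_norm_has_ubound A)); exists ((norm2 x)^-1 *: x).
by rewrite -scalemxAr norm2Z ger0_norm ?invr_ge0 ?norm2_ge0 // mulrC ler_pdivrMr.
Qed.

Lemma spec_norm_ge0 m n (A : 'M[R]_(m, n)) : (0 < n)%N -> 0 <= spec_norm A.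
Proof.
move=> n_gt0; pose e := delta_mx (Ordinal n_gt0) 0 : 'cV[R]_n.
have e1 : norm2 e = 1.
  rewrite /norm2 (bigD1 (Ordinal n_gt0)) //= big1 => [|i /negbTE i_neq].
    by rewrite !mxE !eqxx expr1n addr0 sqrtr1.
  by rewrite mxE i_neq expr0n.
apply: le_trans (norm2_ge0 (A *m e)) _.
by apply: (ub_le_sup (spec_norm_has_ubound A)); exists e.
Qed.

End SpectralNorm.

Lemma char_poly_similar (F : fieldType) n (P A : 'M[F]_n) : P \in unitmx ->
  char_poly (invmx P *m A *m P) = char_poly A.
Proof.
move=> P_unit.
have conj_mx : char_poly_mx (invmx P *m A *m P) =
    map_mx polyC (invmx P) *m char_poly_mx A *m map_mx polyC P.
  rewrite /char_poly_mx mulmxBr mulmxBl -!map_mxM; congr (_ - _).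
  by rewrite mul_mx_scalar -scalemxAl -map_mxM mulVmx // map_mx1 scalemx1.
rewrite /char_poly conj_mx !det_mulmx !det_map_mx mulrC mulrA -rmorphM.
by rewrite -det_mulmx mulmxV // det1 rmorph1 mul1r.
Qed.

Lemma count_lt_nth_sorted (R : realDomainType) (s : seq R) k :
  sorted (fun x y => y <= x) s -> (k < size s)%N ->
  (count (fun y => (y < s`_k)%R) s <= size s - k.+1)%N.
Proof.
move=> s_sorted k_lt; set P := fun y => (y < s`_k)%R.
have -> : count P s = (count P (take k.+1 s) + count P (drop k.+1 s))%N.
  by rewrite -count_cat cat_take_drop.
have -> : count P (take k.+1 s) = 0%N.
  apply/eqP; rewrite -leqn0 leqNgt -has_count.
  apply/hasPn => z /(nthP 0) [j j_lt <-].
  rewrite size_takel // in j_lt; rewrite /P nth_take // -leNgt.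
  have ge_trans : transitive (fun x y : R => y <= x).
    by move=> b a c ba cb; exact: le_trans cb ba.
  by apply: (sorted_leq_nth ge_trans lexx) => //; rewrite inE; lia.
by rewrite add0n (leq_trans (count_size _ _)) // size_drop.
Qed.

Section SpectralDiag.
Variable C : numClosedFieldType.

Lemma spectral_diag_perm_eq n (A : 'M[C]_n) (s : seq C) :
  A \is normalmx -> char_poly A = \prod_(x <- s) ('X - x%:P) ->
  perm_eq [seq spectral_diag A 0 i | i <- enum 'I_n] s.
Proof.
move=> /orthomx_spectralP A_eq cpA; apply: prod_XsubC_eq.
rewrite big_map big_enum /= -cpA [in RHS]A_eq char_poly_similar ?spectral_unit //.
rewrite char_poly_trig ?diag_mx_is_trig //.
by apply: eq_bigr => i _; rewrite mxE eqxx mulr1n.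
Qed.

Lemma diag_form_ge_on_orthogonal n (D : 'rV[C]_n) (lam : C) (u w : 'cV[C]_n) :
  0 < lam -> (#|[pred i | ~~ (lam <= D 0 i)%R]| <= 1)%N ->
  (forall i, D 0 i * u i 0 = 0) -> u != 0 -> \sum_i (w i 0)^* * u i 0 = 0 ->
  lam * \sum_i (w i 0)^* * w i 0 <= \sum_i (w i 0)^* * (D 0 i * w i 0).
Proof.
move=> lam_gt0 /card_le1_eqP small_D Du u_neq0 wu0.
have /existsP [j0 uj0_neq0] : [exists j, u j 0 != 0].
  apply: contraNT u_neq0 => /existsPn u0; apply/eqP/matrixP => i j.
  by rewrite ord1 mxE; apply/eqP/negPn.
have Dj0 : D 0 j0 = 0.
  by have /eqP := Du j0; rewrite mulf_eq0 (negbTE uj0_neq0) orbF => /eqP.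
have D_ge i : i != j0 -> lam <= D 0 i.
  by apply: contraNT => lam_gtD; apply/eqP/small_D; rewrite inE // Dj0 lt_geF.
have u0 i : i != j0 -> u i 0 = 0.
  move=> i_neq; have /eqP := Du i; rewrite mulf_eq0 => /orP [/eqP Di0|/eqP //].
  by have := D_ge i i_neq; rewrite Di0 lt_geF.
have wj0 : (w j0 0)^* = 0.
  move: wu0; rewrite (bigD1 j0) //= big1 ?addr0 => [|i /u0 ->]; last first.
    by rewrite mulr0.
  by move/eqP; rewrite mulf_eq0 (negbTE uj0_neq0) orbF => /eqP.
rewrite mulr_sumr; apply: ler_sum => i _.
have [->|i_neq] := eqVneq i j0; first by rewrite wj0 !mul0r mulr0.
rewrite [leRHS]mulrCA; apply: ler_wpM2r; last exact: D_ge.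
by rewrite mulrC mul_conjC_ge0.
Qed.

End SpectralDiag.

Section RealSymmetric.
Variable R : realType.
Local Notation toC := (real_complex R).
Local Notation cmx := (map_mx toC).

Lemma conj_cmx m n (B : 'M[R]_(m, n)) : map_mx Num.conj (cmx B) = cmx B.
Proof. by apply/matrixP => i j; rewrite !mxE; exact: conjc_real. Qed.

Lemma cmx_dot_unitary n (P : 'M[R[i]]_n) (x y : 'cV[R]_n) : P \is unitarymx ->
  toC ((x^T *m y) 0 0) = \sum_i ((P *m cmx x) i 0)^* * (P *m cmx y) i 0.
Proof.
move=> P_unitary; have P_unit := unitarymx_unit P_unitary.
have Px_adj : map_mx Num.conj (P *m cmx x)^T = (cmx x)^T *m invmx P.
  by rewrite trmx_mul map_mxM invmx_unitary // map_trmx conj_cmx.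
have : cmx (x^T *m y) = map_mx Num.conj (P *m cmx x)^T *m (P *m cmx y).
  by rewrite Px_adj mulmxA mulmxKV // map_mxM map_trmx.
move/matrixP/(_ 0 0); rewrite mxE => ->.
by rewrite mxE; apply: eq_bigr => i _; rewrite !mxE.
Qed.

Lemma sym_quadform_ge_on_kernel_orthogonal n (M : 'M[R]_n) (s : seq R)
    (v x : 'cV[R]_n) :
  (2 <= n)%N -> M^T = M -> sorted (fun a b => b <= a) s -> size s = n ->
  char_poly M = \prod_(y <- s) ('X - y%:P) ->
  M *m v = 0 -> v != 0 -> v^T *m x = 0 -> 0 < s`_(n - 2) ->
  s`_(n - 2) * norm2 x ^+ 2 <= (x^T *m M *m x) 0 0.
Proof.
move=> n_ge2 M_sym s_sorted s_size cpM Mv0 v_neq0 vx0 lam_gt0.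
set lam := s`_(n - 2) in lam_gt0 *.
set Mc := cmx M; set P := spectralmx Mc; set D := spectral_diag Mc.
have Mc_normal : Mc \is normalmx.
  by apply/normalmxP; rewrite /Mc map_trmx M_sym conj_cmx.
have P_unitary : P \is unitarymx := spectral_unitarymx Mc.
have P_unit : P \in unitmx := unitarymx_unit P_unitary.
have PMc z : P *m (Mc *m z) = diag_mx D *m (P *m z).
  by rewrite [in LHS](orthomx_spectralP Mc_normal) !mulmxA mulmxV // mul1mx.
set w := P *m cmx x; set u := P *m cmx v.
have quad_M : toC ((x^T *m M *m x) 0 0) = \sum_i (w i 0)^* * (D 0 i * w i 0).
  rewrite -mulmxA (cmx_dot_unitary _ _ P_unitary) map_mxM PMc.
  by apply: eq_bigr => i _; rewrite mul_diag_mx !mxE.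
have wu0 : \sum_i (w i 0)^* * u i 0 = 0.
  have xv0 : x^T *m v = 0 by rewrite -[x^T *m v]trmxK trmx_mul trmxK vx0 trmx0.
  by rewrite -(cmx_dot_unitary _ _ P_unitary) xv0 mxE.
have Du0 i : D 0 i * u i 0 = 0.
  have /matrixP/(_ i 0) := PMc _ (cmx v).
  by rewrite -map_mxM Mv0 map_mx0 mulmx0 mul_diag_mx !mxE => <-.
have u_neq0 : u != 0.
  apply: contra v_neq0 => /eqP Pv0; rewrite -(map_mx_eq0 toC).
  by rewrite -(mulKmx P_unit (cmx v)) -/u Pv0 mulmx0.
have cpMc : char_poly Mc = \prod_(y <- map toC s) ('X - y%:P).
  rewrite -map_char_poly cpM rmorph_prod big_map; apply: eq_bigr => y _.
  by rewrite rmorphB /= map_polyX map_polyC.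
have few_small : (#|[pred i | ~~ (toC lam <= D 0 i)%R]| <= 1)%N.
  have -> : #|[pred i | ~~ (toC lam <= D 0 i)%R]| =
      count (fun z => ~~ (toC lam <= z)%R) [seq D 0 i | i <- enum 'I_n].
    by rewrite count_map cardE -size_filter enumT.
  rewrite (permP (spectral_diag_perm_eq Mc_normal cpMc)) count_map.
  rewrite (eq_count (a2 := fun y => (y < lam)%R)) => [|y]; last first.
    by rewrite /= lecR -ltNge.
  have k_lt : (n - 2 < size s)%N by rewrite s_size; lia.
  by apply: leq_trans (count_lt_nth_sorted s_sorted k_lt) _; rewrite s_size; lia.
have lamC_gt0 : 0 < toC lam by rewrite ltcR.
have := diag_form_ge_on_orthogonal lamC_gt0 few_small Du0 u_neq0 wu0.
by rewrite -quad_M -(cmx_dot_unitary _ _ P_unitary) -rmorphM lecR trmx_mul_self.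
Qed.

End RealSymmetric.

Section Centering.
Variable R : realType.

Lemma const1_mulmx m n (e : 'cV[R]_n) :
  (const_mx 1 : 'M[R]_(m, n)) *m e = (\sum_i e i 0) *: const_mx 1.
Proof.
apply/matrixP => i j; rewrite !mxE ord1 mulr1.
by apply: eq_bigr => k _; rewrite mxE mul1r.
Qed.

Lemma centering_ones c : (0 < c)%N -> centering c *m (const_mx 1 : 'cV[R]_c) = 0.
Proof.
move=> c_gt0; have sum1 : \sum_i (const_mx 1 : 'cV[R]_c) i 0 = c%:R.
  by under eq_bigr do rewrite mxE; rewrite sumr_const card_ord.
rewrite mulmxBl mul1mx -scalemxAl const1_mulmx sum1 scalerA.
rewrite mulVf ?scale1r ?subrr //.
by rewrite pnatr_eq0 -lt0n.
Qed.

Lemma centering_sum0 c (e : 'cV[R]_c) : \sum_i e i 0 = 0 -> centering c *m e = e.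
Proof.
move=> e_sum0; rewrite mulmxBl mul1mx -scalemxAl const1_mulmx e_sum0.
by rewrite scale0r scaler0 subr0.
Qed.

Lemma centered_lower_bound d c (A : 'M[R]_(d, c)) (sigma : R) (e : 'cV[R]_c) :
  (2 <= c)%N ->
  (exists s : seq R, sq_sing_vals (A *m centering c) s /\
                     sigma <= Num.sqrt (s`_(c - 2))) ->
  \sum_i e i 0 = 0 -> sigma * norm2 e <= norm2 (A *m e).
Proof.
move=> c_ge2 [s [[s_sorted s_size cp] sigma_le]] e_sum0.
have [sigma_le0|sigma_gt0] := lerP sigma 0.
  by apply: le_trans (norm2_ge0 _); rewrite mulr_le0_ge0 ?norm2_ge0.
have lam_gt0 : 0 < s`_(c - 2).
  by rewrite -sqrtr_gt0; apply: lt_le_trans sigma_le.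
set B := A *m centering c; set ones := const_mx 1 : 'cV[R]_c.
have c_gt0 : (0 < c)%N by lia.
have ones_neq0 : ones != 0.
  by apply/negP => /eqP/matrixP/(_ (Ordinal c_gt0) 0)/eqP; rewrite !mxE oner_eq0.
have BtB_sym : (B^T *m B)^T = B^T *m B by rewrite trmx_mul trmxK.
have BtB_ones : B^T *m B *m ones = 0 by rewrite -!mulmxA centering_ones ?mulmx0.
have ones_e : ones^T *m e = 0 by rewrite trmx_const const1_mulmx e_sum0 scale0r.
have := sym_quadform_ge_on_kernel_orthogonal c_ge2 BtB_sym s_sorted s_size cp
  BtB_ones ones_neq0 ones_e lam_gt0.
have Be : B *m e = A *m e by rewrite -mulmxA centering_sum0.
rewrite mulmxA -trmx_mul -mulmxA Be trmx_mul_self => quad_ge.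
rewrite -(@ler_pXn2r _ 2) ?nnegrE ?mulr_ge0 ?norm2_ge0 ?(ltW sigma_gt0) //.
rewrite exprMn; apply: le_trans quad_ge; rewrite ler_wpM2r ?sqr_ge0 //.
by rewrite -(sqr_sqrtr (ltW lam_gt0)) ler_pXn2r ?nnegrE ?sqrtr_ge0 ?(ltW sigma_gt0).
Qed.

End Centering.

Theorem mainTheorem11 (R : realType) (c d k : nat) (hc : (2 <= c)%N) (hd : (c <= d)%N)
  (EGam Gam : 'M[R]_(d, c)) (U : 'M[R]_(d, k)) (m0 : 'cV[R]_d)
  (hU : U^T *m U = 1%:M) (sigma_s : R)
  (hsig : exists s : seq R, sq_sing_vals (EGam *m centering c) s /\
                             sigma_s <= Num.sqrt (s`_(c - 2)))
  (hDG : spec_norm (aprojmx U m0 Gam - EGam) < sigma_s)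
  (g Eg : 'cV[R]_d) (p phat : 'cV[R]_c)
  (hp0 : forall i, 0 <= p i 0) (hp1 : \sum_i p i 0 = 1)
  (hp : EGam *m p = Eg)
  (hphat : aprojmx U m0 Gam *m phat = aproj U m0 g)
  (hphat1 : \sum_i phat i 0 = 1) :
  norm2 (phat - p) <=
    (norm2 (aproj U m0 g - Eg) + Num.sqrt 2 * spec_norm (aprojmx U m0 Gam - EGam))
    / (sigma_s - spec_norm (aprojmx U m0 Gam - EGam)).
Proof.
set DGam := aprojmx U m0 Gam - EGam; set S := spec_norm DGam.
set Dg := aproj U m0 g - Eg; set e := phat - p.
have e_sum0 : \sum_i e i 0 = 0.
  by rewrite /e; under eq_bigr do rewrite !mxE; rewrite sumrB hphat1 hp1 subrr.
have EGam_e : EGam *m e = Dg - DGam *m p - DGam *m e.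
  rewrite /Dg /DGam /e -hphat -hp !mulmxBl !mulmxBr.
  by apply/matrixP => i j; rewrite !mxE; ring.
have S_ge0 : 0 <= S by apply: spec_norm_ge0; lia.
have p_le1 : S * norm2 p <= S by rewrite ler_piMr ?norm2_prob_le1.
have EGam_e_le : norm2 (EGam *m e) <= norm2 Dg + S + S * norm2 e.
  rewrite EGam_e; apply: le_trans (norm2D _ _) _; rewrite norm2N.
  apply: lerD; last exact: norm2_mulmx_le.
  apply: le_trans (norm2D _ _) _; rewrite norm2N lerD2l.
  exact: le_trans (norm2_mulmx_le _ _) p_le1.
have sigma_e_le := centered_lower_bound hc hsig e_sum0.
have sqrt2_ge1 : 1 <= Num.sqrt 2 :> R by rewrite -[leLHS]sqrtr1 ler_sqrt // ler1n.
rewrite ler_pdivlMr ?subr_gt0 //.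
have := norm2_ge0 e; have := norm2_ge0 Dg; nra.
Qed.
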